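(* Let $P$ be an $n\times n$ non-negative matrix that is diagonally dominant, i.e. $P(i,i)\ge\sum_{j\ne i}P(i,j)$ for $1\le i\le n$. Then $$\max_{Q\in\Omega_n}CW(P,Q)=\max_{Q\in RS_n}CW(P,Q)=\sum_{1\le i\le n}\log(P(i,i)).$$
   Context: $\Omega_n$ is the set of $n\times n$ doubly-stochastic matrices and $RS_n$ the set of $n\times n$ row-stochastic matrices (non-negative entries, each row sums to $1$). For non-negative $n\times n$ matrices $P,Q$, $$CW(P,Q)=\sum_{i,j}(1-Q(i,j))\log(1-Q(i,j)) - \sum_{i,j}Q(i,j)\log\!\left(\frac{Q(i,j)}{P(i,j)}\right),$$ with the conventions $0^0=1$ (a term with $Q(i,j)=0$ contributes $0$), a term with $Q(i,j)>0=P(i,j)$ equals $-\infty$, and $\log 0=-\infty$. *)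

From HB Require Import structures.
From mathcomp Require Import all_boot all_order all_algebra.
From mathcomp Require Import all_classical all_reals all_analysis.
Set Implicit Arguments. Unset Strict Implicit. Unset Printing Implicit Defensive.
Import Order.TTheory GRing.Theory Num.Theory.
Local Open Scope ring_scope.
Local Open Scope ereal_scope.

Definition elog (R : realType) (x : R) : \bar R :=
  if x == 0%R then -oo else (ln x)%:E.

Definition row_stochastic (R : realType) (n : nat) (Q : 'M[R]_n) : Prop :=
  (forall i j, (0 <= Q i j)%R) /\ (forall i, (\sum_j Q i j = 1)%R).

Definition doubly_stochastic (R : realType) (n : nat) (Q : 'M[R]_n) : Prop :=
  row_stochastic Q /\ (forall j, (\sum_i Q i j = 1)%R).

(* (1-q) log (1-q), with 0 log 0 = 0 (convention 0^0 = 1) *)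
Definition CW_term1 (R : realType) (q : R) : \bar R :=
  if (1 - q == 0)%R then 0 else ((1 - q) * ln (1 - q))%R%:E.

Definition CW_term2 (R : realType) (p q : R) : \bar R :=
  if q == 0%R then 0
  else if p == 0%R then -oo
  else (- (q * ln (q / p)))%R%:E.

Definition CW (R : realType) (n : nat) (P Q : 'M[R]_n) : \bar R :=
  \sum_i \sum_j (CW_term1 (Q i j) + CW_term2 (P i j) (Q i j)).

Definition is_max_on (T : Type) (R : realType) (A : T -> Prop) (f : T -> \bar R)
  (m : \bar R) : Prop :=
  (exists x, A x /\ f x = m) /\ (forall x, A x -> f x <= m).

From HB Require Import structures.
From mathcomp Require Import all_boot all_order all_algebra.
From mathcomp Require Import all_classical all_reals all_analysis.
From mathcomp Require Import ring lra.
Import Order.TTheory GRing.Theory Num.Theory.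
Local Open Scope ring_scope.

(* Work row by row; write q for row i of Q, p for row i of P and
   s = 1 - q i = \sum_(j != i) q j.  Since x ln x / (1 - x) is nonincreasing
   on (0, 1), the off-diagonal terms (1 - q j) ln (1 - q j) add up to at most
   q i ln (q i).  By the log-sum inequality and diagonal dominance, the
   off-diagonal terms - q j ln (q j / p j) add up to at most
   s ln (p i) - s ln s.  Together with the two diagonal terms the row
   contributes at most (s + q i) ln (p i) = ln (p i), and the identity matrix
   attains this bound. *)

Section LnInequalities.
Variable R : realType.
Implicit Types a b c t x y : R.

Lemma ln_le_sub1 x : 0 < x -> ln x <= x - 1.
Proof.
move=> x0; have := @le_ln1Dx R (x - 1).
by rewrite (addrC 1) subrK; apply; lra.
Qed.

Lemma mulr_ln_div x y : 0 <= x -> 0 < y -> x * ln (x / y) = x * ln x - x * ln y.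
Proof.
move=> x0 y0; have [->|xn0] := eqVneq x 0; first by rewrite !mul0r subrr.
have xp : 0 < x by rewrite lt0r xn0.
by rewrite lnM ?posrE ?invr_gt0 // lnV ?posrE // mulrDr mulrN.
Qed.

(* Equivalently, x ln x / (1 - x) is nonincreasing on (0, 1): compare it at
   b <= 1 - a. *)
Lemma xlnx_mix a b : 0 <= a -> 0 <= b -> a + b <= 1 ->
  (1 - b) * ((1 - a) * ln (1 - a)) <= a * (b * ln b).
Proof.
move=> a0 b0 ab1; have [->|bn0] := eqVneq b 0.
  rewrite subr0 mul1r !mul0r mulr0.
  by apply: mulr_ge0_le0; [lra | apply: ln_le0; lra].
have bp : 0 < b by rewrite lt0r bn0.
have up : 0 < 1 - a by lra.
set u := 1 - a in up *.
have ln_u := ln_le_sub1 _ up.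
have ln_uw : b * (ln u - ln b) <= u - b.
  have := ln_le_sub1 _ (divr_gt0 up bp).
  rewrite lnM ?posrE ?invr_gt0 // lnV ?posrE // => h.
  have := ler_wpM2l (ltW bp) h.
  by have -> : b * (u / b - 1) = u - b by field; rewrite gt_eqF.
have ea : a = 1 - u by rewrite /u; ring.
have A : 0 <= (u - b) * (u - 1 - ln u) by apply: mulr_ge0; lra.
have B : 0 <= a * (u - b - b * (ln u - ln b)) by apply: mulr_ge0; lra.
(* The right-hand side minus the left-hand side is exactly A + B. *)
nra.
Qed.

(* The tangent-line bound ln x <= x - 1 at x = b t / (c a). *)
Lemma neg_mulr_ln_div_le a b c t : 0 < a -> 0 < b -> 0 < c -> 0 < t ->
  - (a * ln (a / b)) <= a * ln c - a * ln t + b * t / c - a.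
Proof.
move=> a0 b0 c0 t0.
have x0 : 0 < b * t / (c * a) by rewrite divr_gt0 ?mulr_gt0.
have h := ln_le_sub1 _ x0.
rewrite !lnM ?posrE ?invr_gt0 ?mulr_gt0 // !lnV ?posrE ?mulr_gt0 // lnM ?posrE // in h.
rewrite mulr_ln_div ?(ltW a0) //.
have := ler_wpM2l (ltW a0) h.
have -> : a * (b * t / (c * a) - 1) = b * t / c - a by field; rewrite ?gt_eqF.
lra.
Qed.

Lemma log_sum_le (I : finType) (P : pred I) (a b : I -> R) c :
  (forall j, 0 <= a j) -> (forall j, 0 <= b j) ->
  (forall j, a j != 0 -> b j != 0) ->
  \sum_(j | P j) b j <= c -> 0 < c ->
  - \sum_(j | P j) a j * ln (a j / b j)
    <= (\sum_(j | P j) a j) * (ln c - ln (\sum_(j | P j) a j)).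
Proof.
move=> a0 b0 ab Bc c0; set A := \sum_(j | P j) a j.
have [A0|An0] := eqVneq A 0.
  have aP0 j : P j -> a j = 0 by move: A0 => /psumr_eq0P; apply.
  by rewrite A0 mul0r big1 ?oppr0 // => j /aP0 ->; rewrite mul0r.
have Ap : 0 < A by rewrite lt0r An0 sumr_ge0.
rewrite -sumrN.
apply: (@le_trans _ _ (\sum_(j | P j) (a j * ln c - a j * ln A + b j * A / c - a j))).
  apply: ler_sum => j _.
  have [->|ajn0] := eqVneq (a j) 0.
    by rewrite !mul0r oppr0 !add0r addr0 divr_ge0 ?mulr_ge0 // ltW.
  have ajp : 0 < a j by rewrite lt0r ajn0 a0.
  have bjp : 0 < b j by rewrite lt0r ab ?b0.
  exact: neg_mulr_ln_div_le.
rewrite !big_split /= !sumrN -!mulr_suml -/A.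
have : (\sum_(j | P j) b j) * A / c <= A.
  by rewrite ler_pdivrMr // mulrC ler_wpM2l // ltW.
lra.
Qed.

Lemma sum_xlnx_compl_le (I : finType) (P : pred I) (a : I -> R) b :
  (forall j, 0 <= a j) -> 0 <= b -> \sum_(j | P j) a j + b = 1 ->
  \sum_(j | P j) (1 - a j) * ln (1 - a j) <= b * ln b.
Proof.
move=> a0 b0 sum1.
have aP_le j : P j -> a j + b <= 1.
  by move=> Pj; rewrite -sum1 lerD2r (bigD1 j) //= lerDl sumr_ge0.
have [b1|bn1] := eqVneq b 1.
  rewrite b1 ln1 mulr0 big1 // => j Pj.
  have -> : a j = 0 by have := aP_le j Pj; have := a0 j; lra.
  by rewrite subr0 ln1 mulr0.
have sp : 0 < 1 - b.
  have : 0 <= \sum_(j | P j) a j by exact: sumr_ge0.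
  by rewrite lt0r subr_eq0 eq_sym bn1 /=; lra.
rewrite -(ler_pM2l sp) mulr_sumr.
apply: (@le_trans _ _ (\sum_(j | P j) a j * (b * ln b))).
  by apply: ler_sum => j Pj; apply: xlnx_mix => //; exact: aP_le.
by rewrite -mulr_suml; have -> : \sum_(j | P j) a j = 1 - b by lra.
Qed.

End LnInequalities.

Section Row.
Variables (R : realType) (I : finType) (p q : I -> R) (i : I).
Hypotheses (p_ge0 : forall j, 0 <= p j) (q_ge0 : forall j, 0 <= q j).
Hypothesis q_sum1 : \sum_j q j = 1.
Hypothesis q_supp : forall j, q j != 0 -> p j != 0.
Hypothesis p_diagdom : \sum_(j | j != i) p j <= p i.

Lemma diag_gt0 j : 0 < p j -> 0 < p i.
Proof.
move=> pj0; have [<-//|ji] := eqVneq j i.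
apply: (lt_le_trans pj0); apply: le_trans p_diagdom.
by rewrite (bigD1 j) //= lerDl sumr_ge0.
Qed.

Lemma row_le_ln_diag : 0 < p i ->
  \sum_j ((1 - q j) * ln (1 - q j) - q j * ln (q j / p j)) <= ln (p i).
Proof.
move=> pi0; rewrite (bigD1 i) //= big_split /= sumrN.
set s := \sum_(j | j != i) q j.
have s_qi : s + q i = 1 by rewrite -q_sum1 (bigD1 i) //= addrC.
have -> : 1 - q i = s by lra.
have T1 : \sum_(j | j != i) (1 - q j) * ln (1 - q j) <= q i * ln (q i).
  exact: sum_xlnx_compl_le.
have T2 : - \sum_(j | j != i) q j * ln (q j / p j) <= s * (ln (p i) - ln s).
  exact: log_sum_le.
have lnp : s * ln (p i) + q i * ln (p i) = ln (p i) by rewrite -mulrDl s_qi mul1r.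
rewrite mulr_ln_div //.
lra.
Qed.

End Row.

Lemma CW_terms_EFin {R : realType} {p q : R} : (q != 0 -> p != 0) ->
  (CW_term1 q + CW_term2 p q = ((1 - q) * ln (1 - q) - q * ln (q / p))%:E)%E.
Proof.
move=> supp; have t1 : CW_term1 q = ((1 - q) * ln (1 - q))%:E.
  by rewrite /CW_term1; case: eqP => [->|]; rewrite ?mul0r.
have t2 : CW_term2 p q = (- (q * ln (q / p)))%:E.
  rewrite /CW_term2; case: eqP => [->|/eqP qn0]; first by rewrite mul0r oppr0.
  by rewrite (negbTE (supp qn0)).
by rewrite t1 t2 -EFinD.
Qed.

Lemma CW_le_sum_elog (R : realType) (n : nat) (P Q : 'M[R]_n) :
  (forall i j, 0 <= P i j) -> (forall i, \sum_(j | j != i) P i j <= P i i) ->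
  row_stochastic Q -> (CW P Q <= \sum_i elog (P i i))%E.
Proof.
move=> P_ge0 P_diagdom [Q_ge0 Q_sum1]; apply: lee_sum => i _.
have [[j /andP [qj pj]]|supp] := pselect (exists j, (Q i j != 0) && (P i j == 0)).
  by rewrite (bigD1 j) //= /CW_term2 (negbTE qj) pj addeNy addNye leNye.
have {}supp j : Q i j != 0 -> P i j != 0.
  by move=> qj; apply/negP => pj; apply: supp; exists j; rewrite qj pj.
have [j qj] : exists j, Q i j != 0.
  apply/existsP; apply: contraT; rewrite negb_exists => /forallP Q0.
  have := Q_sum1 i; rewrite big1 => [/eqP|j _]; last exact/eqP/negPn/Q0.
  by rewrite eq_sym oner_eq0.
have Pij_gt0 : 0 < P i j by rewrite lt0r supp ?P_ge0.
have Pii_gt0 := @diag_gt0 _ _ _ i (P_ge0 i) (P_diagdom i) j Pij_gt0.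
rewrite (eq_bigr _ (fun j _ => CW_terms_EFin (supp j))) sumEFin.
rewrite /elog gt_eqF // lee_fin.
exact: row_le_ln_diag.
Qed.

Lemma CW_mx1 (R : realType) (n : nat) (P : 'M[R]_n) :
  (forall i j, 0 <= P i j) -> CW P 1%:M = (\sum_i elog (P i i))%E.
Proof.
move=> P_ge0; apply: eq_bigr => i _; rewrite (bigD1 i) //= big1 ?adde0.
  rewrite mxE eqxx /CW_term1 /CW_term2 subrr eqxx oner_eq0 add0e /elog.
  case: eqP => // /eqP Pii0; have Pii_gt0 : 0 < P i i by rewrite lt0r Pii0 P_ge0.
  by rewrite mul1r div1r lnV ?posrE // opprK.
move=> j ji; rewrite mxE eq_sym (negbTE ji) /CW_term1 /CW_term2 eqxx subr0.
by rewrite oner_eq0 ln1 mulr0 adde0.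
Qed.

Lemma doubly_stochastic1 (R : realType) (n : nat) : doubly_stochastic (1%:M : 'M[R]_n).
Proof.
have sum_delta (i : 'I_n) (F : 'I_n -> R) : F i = 1 -> (forall j, j != i -> F j = 0) ->
    \sum_j F j = 1.
  by move=> Fi F0; rewrite (bigD1 i) //= big1 ?addr0.
split; first split.
- by move=> i j; rewrite mxE ler0n.
- by move=> i; apply: (sum_delta i) => [|j ji]; rewrite mxE ?eqxx // eq_sym (negbTE ji).
- by move=> j; apply: (sum_delta j) => [|i ij]; rewrite mxE ?eqxx // (negbTE ij).
Qed.

Theorem corollary5p10 (R : realType) (n : nat) (P : 'M[R]_n)
  (P_nonneg : forall i j, 0 <= P i j)
  (P_diagdom : forall i, \sum_(j | j != i) P i j <= P i i) :
  is_max_on (@doubly_stochastic R n) (CW P) (\sum_i elog (P i i))%E /\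
  is_max_on (@row_stochastic R n) (CW P) (\sum_i elog (P i i))%E.
Proof.
have [Id_rs _] := doubly_stochastic1 R n.
split; split.
- by exists 1%:M; split; [exact: doubly_stochastic1 | exact: CW_mx1].
- by move=> Q [Q_rs _]; exact: CW_le_sum_elog.
- by exists 1%:M; split; last exact: CW_mx1.
- by move=> Q; exact: CW_le_sum_elog.
Qed.
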